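(* Let $S_3^n=S_{K_3}^n$. Then $\chi_i'(S_3^1)=3$, $\chi_i'(S_3^2)=4$, and $\chi_i'(S_3^n)=5$ for every $n\ge 3$.
   Context: For a graph $H$ with at least one edge, an injective edge $k$-coloring is a map $c:E(H)\to\{1,\dots,k\}$ such that whenever $e_1=xy$, $e_2=yz$, $e_3=zu$ are edges of $H$ with $x,y,z$ distinct and $u\notin\{y,z\}$ (the case $u=x$ being allowed), we have $c(e_1)\ne c(e_3)$. The injective chromatic index $\chi_i'(H)$ is the least $k$ for which such a coloring exists. For a graph $G$ and positive integer $n$, the generalized Sierpiński graph $S_G^n$ has vertex set $V(G)^n$, and $(u_1,\dots,u_n)$, $(v_1,\dots,v_n)$ are adjacent if and only if there is $d\in\{1,\dots,n\}$ with $u_i=v_i$ for $i<d$, $u_dv_d\in E(G)$, and $u_i=v_d$, $v_i=u_d$ for all $i>d$. $K_3$ is the triangle. *)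

From mathcomp Require Import all_boot.
Set Implicit Arguments. Unset Strict Implicit. Unset Printing Implicit Defensive.

(* Generalized Sierpinski graph S_G^n: vertices are words of length n over the
   vertex set of G, represented as {ffun 'I_n -> T}; position d (1-based in the
   paper) is index d-1 here. *)
Definition sierp (T : finType) (G : rel T) (n : nat) : rel {ffun 'I_n -> T} :=
  fun u v => [exists d : 'I_n,
    [&& [forall i : 'I_n, (i < d) ==> (u i == v i)],
        G (u d) (v d) &
        [forall i : 'I_n, (d < i) ==> ((u i == v d) && (v i == u d))]]].

Arguments sierp {T} G n _ _.

Definition K3 : rel 'I_3 := fun x y => x != y.

(* An injective edge k-coloring of the graph with adjacency relation e:
   a map from edges (unordered adjacent pairs) to {1,...,k}, represented as a
   function on ordered pairs that is symmetric on edges. *)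
Definition inj_edge_coloring (T : finType) (e : rel T) (k : nat)
    (c : T -> T -> nat) : Prop :=
  (forall x y, e x y -> c x y = c y x) /\
  (forall x y, e x y -> 1 <= c x y <= k) /\
  (forall x y z u, e x y -> e y z -> e z u ->
     x != y -> y != z -> x != z -> u != y -> u != z ->
     c x y != c z u).

Definition inj_edge_colorable (T : finType) (e : rel T) (k : nat) : Prop :=
  exists c : T -> T -> nat, inj_edge_coloring e k c.

Definition inj_chromatic_index_is (T : finType) (e : rel T) (k : nat) : Prop :=
  inj_edge_colorable e k /\ (forall j, j < k -> ~ inj_edge_colorable e j).

(* An injective edge coloring is the same thing as a proper vertex coloring of
   the conflict graph whose vertices are the edges, two edges conflicting when
   they are the end edges of a path x y z u (u = x allowed).  Words of length k
   over {0,1,2} prefixed by n - k zeros embed S_3^k into S_3^n, so the lower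
   bounds reduce to an exhaustive search showing that the conflict graphs of
   S_3^1, S_3^2 and S_3^3 have no proper 2-, 3- and 4-coloring.  The upper
   bounds for n = 1, 2 are explicit colorings.  For n >= 3, mapping a word to
   its last three letters, remembering in addition the last letter that differs
   from the final one when these three letters agree, is a homomorphism of
   S_3^n into a fixed graph on 33 vertices that is injective on neighbourhoods;
   such maps pull injective edge colorings back, and the fixed graph has an
   injective edge 5-coloring. *)

From mathcomp Require Import all_boot zify.
Set Implicit Arguments. Unset Strict Implicit. Unset Printing Implicit Defensive.

(** * Injective edge colorings as colorings of a conflict graph *)

Lemma inj_edge_colorable_le (T : finType) (e : rel T) j k :
  j <= k -> inj_edge_colorable e j -> inj_edge_colorable e k.
Proof.
move=> le_jk [c [c_sym [c_range c_inj]]]; exists c; split=> //; split=> // x y exy.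
by have /andP[-> /leq_trans->] := c_range x y exy.
Qed.

Lemma inj_chromatic_index_is_intro (T : finType) (e : rel T) k :
  inj_edge_colorable e k -> ~ inj_edge_colorable e k.-1 ->
  inj_chromatic_index_is e k.
Proof.
move=> col_k not_col; split=> // j lt_jk /(inj_edge_colorable_le (k := k.-1)).
by move=> col; apply/not_col/col; lia.
Qed.

Definition proper_coloring (nbrs : seq (seq nat)) (j : nat) (asg : seq nat) :=
  all (fun i => (0 < nth 0 asg i <= j) &&
                all (fun h => nth 0 asg h != nth 0 asg i) (nth [::] nbrs i))
      (iota 0 (size nbrs)).

(* [if] rather than [&&] so that vm_compute does not explore failing branches. *)
Fixpoint coloring_extendable (nbrs : seq (seq nat)) (j : nat) (asg : seq nat) :=
  if nbrs is ns :: nbrs' then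
    has (fun col => if all (fun h => nth 0 asg h != col) ns
                    then coloring_extendable nbrs' j (rcons asg col) else false)
        (iota 1 j)
  else true.

Lemma proper_coloring_extendable nbrs j asg :
  proper_coloring nbrs j asg -> coloring_extendable nbrs j [::].
Proof.
move=> /allP proper.
suff ext m : m <= size nbrs ->
    coloring_extendable (drop (size nbrs - m) nbrs) j (take (size nbrs - m) asg).
  by have := ext _ (leqnn _); rewrite subnn drop0 take0.
elim: m => [_|m IHm lt_m]; first by rewrite subn0 drop_size.
have [i [def_i lt_i]] : exists i, size nbrs - m.+1 = i /\ i < size nbrs.
  by exists (size nbrs - m.+1); split=> //; lia.
have i_in : i \in iota 0 (size nbrs) by rewrite mem_iota.
have /andP[range fresh] := proper i i_in.
rewrite def_i (drop_nth [::] lt_i) /=; apply/hasP; exists (nth 0 asg i).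
  by rewrite mem_iota; lia.
rewrite ifT; last first.
  apply/allP=> h /(allP fresh); have [lt_hi|ge_hi] := ltnP h i.
    by rewrite nth_take.
  (* past the assigned prefix, [nth] returns 0, which is not a color *)
  have size_take_le : size (take i asg) <= h by rewrite size_take_min; lia.
  by rewrite (nth_default 0 size_take_le) => _; apply: contraTneq range => <-.
have -> : rcons (take i asg) (nth 0 asg i) = take i.+1 asg.
  have [lt_asg|ge_asg] := ltnP i (size asg); first by rewrite (take_nth 0).
  by move: range; rewrite nth_default.
have -> : i.+1 = size nbrs - m by lia.
by apply: IHm; lia.
Qed.

Section ConflictGraph.

Variables (S : eqType) (R : rel S) (L : seq S).
Hypotheses (R_sym : symmetric R) (R_irr : irreflexive R).

Definition edges_in : seq (S * S) :=
  [seq st <- [seq (x, y) | x <- L, y <- L] | (index st.1 L < index st.2 L) && R st.1 st.2].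

Lemma mem_edges_in s t :
  ((s, t) \in edges_in) = [&& s \in L, t \in L, index s L < index t L & R s t].
Proof.
have st_pairs : ((s, t) \in [seq (x, y) | x <- L, y <- L]) = (s \in L) && (t \in L).
  by apply/allpairsP/andP => [[[x y] [/= ? ? [-> ->]]] | []] //; exists (s, t).
by rewrite mem_filter st_pairs /= andbC -!andbA.
Qed.

Lemma edges_in_cover s t : s \in L -> t \in L -> R s t ->
  ((s, t) \in edges_in) || ((t, s) \in edges_in).
Proof.
move=> sL tL Rst; rewrite !mem_edges_in sL tL Rst R_sym Rst /=.
have : index s L != index t L.
  by apply: contraTneq Rst => /(congr1 (nth s L)); rewrite !nth_index // => ->; rewrite R_irr.
by case: ltngtP.
Qed.

Definition path_conflict (x y z u : S) := [&& R y z, x != z & u != y].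

Definition edge_conflict (e1 e2 : S * S) :=
  let: (x, y) := e1 in let: (z, u) := e2 in
  [|| path_conflict x y z u, path_conflict y x z u,
      path_conflict x y u z | path_conflict y x u z].

Lemma path_conflict_rev x y z u : path_conflict x y z u = path_conflict u z y x.
Proof. by rewrite /path_conflict R_sym [(x != z) && _]andbC. Qed.

Lemma edge_conflictC e1 e2 : edge_conflict e1 e2 = edge_conflict e2 e1.
Proof.
case: e1 e2 => [x y] [z u] /=.
rewrite ![path_conflict z _ _ _]path_conflict_rev ![path_conflict u _ _ _]path_conflict_rev.
by case: (path_conflict x y z u); case: (path_conflict y x u z); rewrite ?orbT.
Qed.

Lemma path_edge_conflict x y z u e1 e2 : path_conflict x y z u ->
  e1 \in [:: (x, y); (y, x)] -> e2 \in [:: (z, u); (u, z)] -> edge_conflict e1 e2.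
Proof.
by move=> xyzu; rewrite !inE => /orP[]/eqP-> /orP[]/eqP->; rewrite /= xyzu ?orbT.
Qed.

(* Entry i lists the earlier edges conflicting with edge i; the [let] makes
   vm_compute build [edges_in] only once. *)
Definition conflict_nbrs : seq (seq nat) :=
  let E := edges_in in
  [seq [seq h <- iota 0 ie.1 | edge_conflict (nth ie.2 E h) ie.2]
  | ie <- zip (iota 0 (size E)) E].

Lemma size_conflict_nbrs : size conflict_nbrs = size edges_in.
Proof. by rewrite size_map size_zip size_iota minnn. Qed.

Lemma nth_conflict_nbrs e0 i : i < size edges_in ->
  nth [::] conflict_nbrs i =
  [seq h <- iota 0 i | edge_conflict (nth e0 edges_in h) (nth e0 edges_in i)].
Proof.
move=> lt_i; rewrite (nth_map (0, e0)) ?size_zip ?size_iota ?minnn //.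
rewrite nth_zip ?size_iota //= nth_iota //; apply: eq_in_filter => h.
by rewrite mem_iota => /andP[_ lt_hi]; rewrite (set_nth_default e0) //; lia.
Qed.

Definition edge_index (s t : S) :=
  find (fun st => (st == (s, t)) || (st == (t, s))) edges_in.

Definition edge_color (asg : seq nat) (s t : S) := nth 0 asg (edge_index s t).

Lemma edge_indexC s t : edge_index s t = edge_index t s.
Proof. by apply: eq_find => st; apply: orbC. Qed.

Lemma edge_index_lt s t : s \in L -> t \in L -> R s t -> edge_index s t < size edges_in.
Proof.
move=> sL tL Rst; rewrite -has_find; apply/hasP.
have /orP[st_in|ts_in] := edges_in_cover sL tL Rst.
  by exists (s, t); rewrite ?eqxx.
by exists (t, s); rewrite ?eqxx ?orbT.
Qed.

Lemma nth_edge_index e0 s t : s \in L -> t \in L -> R s t ->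
  nth e0 edges_in (edge_index s t) \in [:: (s, t); (t, s)].
Proof.
by move=> sL tL /(edge_index_lt sL tL); rewrite -has_find => /(nth_find e0); rewrite !inE.
Qed.

Lemma edge_conflict_irr : irreflexive edge_conflict.
Proof. by case=> x y; rewrite /= /path_conflict !R_irr !eqxx !andbF. Qed.

Lemma edges_inP st : st \in edges_in ->
  [/\ st.1 \in L, st.2 \in L, st.1 != st.2 & R st.1 st.2].
Proof.
case: st => s t; rewrite mem_edges_in => /and4P[sL tL lt_st Rst]; split=> //=.
by apply: contraTneq lt_st => ->; rewrite ltnn.
Qed.

Lemma mem_conflict_nbrs e0 h i : h < i < size edges_in ->
  edge_conflict (nth e0 edges_in h) (nth e0 edges_in i) -> h \in nth [::] conflict_nbrs i.
Proof.
by move=> /andP[lt_hi lt_i] conf; rewrite (nth_conflict_nbrs e0) // mem_filter conf mem_iota.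
Qed.

Section Transfer.

Variables (T : finType) (e : rel T).
Hypothesis e_sym : symmetric e.

Lemma inj_edge_coloring_pullback (F : T -> S) j asg :
  (forall x, F x \in L) -> {homo F : x y / e x y >-> R x y} ->
  (forall x y z, e x y -> e x z -> y != z -> F y != F z) ->
  proper_coloring conflict_nbrs j asg ->
  inj_edge_coloring e j (fun x y => edge_color asg (F x) (F y)).
Proof.
move=> F_in F_hom F_inj /allP proper.
pose idx x y := edge_index (F x) (F y).
have idx_lt x y : e x y -> idx x y < size edges_in.
  by move=> /F_hom; apply: edge_index_lt.
have proper_at x y : e x y -> (0 < edge_color asg (F x) (F y) <= j) &&
    all (fun h => nth 0 asg h != edge_color asg (F x) (F y))
        (nth [::] conflict_nbrs (idx x y)).
  by move=> /idx_lt lt_xy; apply: proper; rewrite mem_iota size_conflict_nbrs.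
split; [|split].
- by move=> x y _; rewrite /edge_color edge_indexC.
- by move=> x y /proper_at /andP[].
move=> x y z u exy eyz ezu _ _ neq_xz neq_uy _.
pose e0 := (F x, F y).
have conf : edge_conflict (nth e0 edges_in (idx x y)) (nth e0 edges_in (idx z u)).
  apply: path_edge_conflict (nth_edge_index _ _ _ (F_hom _ _ exy))
                            (nth_edge_index _ _ _ (F_hom _ _ ezu)) => //.
  have [eyx ezy] : e y x /\ e z y by rewrite !(e_sym _ x) (e_sym z).
  by rewrite /path_conflict F_hom //= (F_inj y) // (F_inj z).
have [lt_idx|gt_idx|eq_idx] := ltngtP (idx x y) (idx z u).
- have /andP[_ /allP fresh] := proper_at _ _ ezu; apply: (fresh (idx x y)).
  by rewrite (mem_conflict_nbrs (e0 := e0)) // lt_idx idx_lt.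
- have /andP[_ /allP fresh] := proper_at _ _ exy; rewrite eq_sym; apply: (fresh (idx z u)).
  by rewrite (mem_conflict_nbrs (e0 := e0)) 1?edge_conflictC // gt_idx idx_lt.
- by move: conf; rewrite eq_idx edge_conflict_irr.
Qed.

Lemma proper_coloring_of_inj_edge_coloring (G : S -> T) j c :
  {in L &, injective G} -> {in L &, forall s t, R s t -> e (G s) (G t)} ->
  inj_edge_coloring e j c ->
  proper_coloring conflict_nbrs j [seq c (G st.1) (G st.2) | st <- edges_in].
Proof.
move=> G_inj G_hom [c_sym [c_range c_inj]].
have G_neq s t : s \in L -> t \in L -> s != t -> G s != G t.
  by move=> sL tL; rewrite (inj_in_eq G_inj).
have path_neq x y z u : path_conflict x y z u ->
    x \in L -> y \in L -> z \in L -> u \in L ->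
    R x y -> R z u -> c (G x) (G y) != c (G z) (G u).
  move=> /and3P[Ryz neq_xz neq_uy] xL yL zL uL Rxy Rzu.
  apply: c_inj; rewrite ?G_hom ?G_neq //.
  - by apply: contraTneq Rxy => ->; rewrite R_irr.
  - by apply: contraTneq Ryz => ->; rewrite R_irr.
  - by apply: contraTneq Rzu => ->; rewrite R_irr.
have conflict_neq st1 st2 : st1 \in edges_in -> st2 \in edges_in ->
    edge_conflict st1 st2 -> c (G st1.1) (G st1.2) != c (G st2.1) (G st2.2).
  case: st1 st2 => [x y] [z u] /edges_inP[/= xL yL _ Rxy] /edges_inP[/= zL uL _ Rzu].
  have cyx : c (G y) (G x) = c (G x) (G y) by rewrite c_sym //; apply: G_hom; rewrite // R_sym.
  have cuz : c (G u) (G z) = c (G z) (G u) by rewrite c_sym //; apply: G_hom; rewrite // R_sym.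
  by case/or4P=> /path_neq; rewrite ?cyx ?cuz; apply=> //; rewrite R_sym.
apply/allP=> i; rewrite mem_iota size_conflict_nbrs => /andP[_ lt_i].
have [e0 _] : {e0 : S * S | true} by case: edges_in lt_i => // st; exists st.
have /edges_inP[L_i1 L_i2 _ R_i] := mem_nth e0 lt_i.
rewrite (nth_map e0) // c_range ?(G_hom _ _ L_i1 L_i2 R_i) //=; apply/allP=> h.
rewrite (nth_conflict_nbrs e0) // mem_filter mem_iota => /andP[conf /andP[_ lt_hi]].
have lt_h : h < size edges_in by apply: ltn_trans lt_i.
by rewrite (nth_map e0) // conflict_neq // mem_nth.
Qed.

Lemma not_inj_edge_colorable (G : S -> T) j :
  {in L &, injective G} -> {in L &, forall s t, R s t -> e (G s) (G t)} ->
  ~~ coloring_extendable conflict_nbrs j [::] -> ~ inj_edge_colorable e j.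
Proof.
move=> G_inj G_hom not_ext [c /(proper_coloring_of_inj_edge_coloring G_inj G_hom)].
by move/proper_coloring_extendable; apply/negP.
Qed.

End Transfer.

End ConflictGraph.

(** * Words over {0, 1, 2} *)

Fixpoint word_adj (x y : seq nat) : bool :=
  match x, y with
  | a :: x', b :: y' =>
      if a == b then word_adj x' y'
      else [&& size x' == size y', all (pred1 b) x' & all (pred1 a) y']
  | _, _ => false
  end.

Definition ternary (w : seq nat) := all (fun a => a < 3) w.

Fixpoint words n : seq (seq nat) :=
  if n is n'.+1 then [seq a :: w | a <- iota 0 3, w <- words n'] else [:: [::]].

Lemma mem_words n w : (w \in words n) = (size w == n) && ternary w.
Proof.
elim: n w => [|n IHn] w; first by case: w.
case: w => [|a w]; first by apply/negbTE/allpairsP => -[[b v] [_ _]].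
rewrite [in RHS]/= eqSS.
apply/allpairsP/and3P => [[[b v] [b_in v_in [-> ->]]]|[size_w a_lt ter_w]].
  by move: b_in v_in; rewrite mem_iota IHn /= => -> /andP[-> ->].
by exists (a, w); rewrite mem_iota IHn size_w.
Qed.

Lemma word_adj_size x y : word_adj x y -> size x = size y.
Proof.
elim: x y => [|a x IHx] [|b y] //=.
by case: eqP => _ => [/IHx -> | /and3P[/eqP ->]].
Qed.

Lemma word_adj_sym : symmetric word_adj.
Proof.
elim=> [|a x IHx] [|b y] //=; rewrite eq_sym IHx.
by case: (b == a) => //; rewrite [size y == _]eq_sym [all _ y && _]andbC.
Qed.

Lemma word_adj_irr : irreflexive word_adj.
Proof. by elim=> [|a x IHx] //=; rewrite eqxx. Qed.

Lemma word_adj_cat p x y : word_adj (p ++ x) (p ++ y) = word_adj x y.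
Proof. by elim: p => //= a p IHp; rewrite eqxx. Qed.

Lemma word_adj_swap p a b m :
  a != b -> word_adj (p ++ a :: nseq m b) (p ++ b :: nseq m a).
Proof.
by move=> neq_ab; rewrite word_adj_cat /= (negbTE neq_ab) !size_nseq eqxx !all_pred1_nseq.
Qed.

Lemma word_adj_shape x y : word_adj x y ->
  exists p a b m, [/\ a != b, x = p ++ a :: nseq m b & y = p ++ b :: nseq m a].
Proof.
elim: x y => [|a x IHx] [|b y] //=; case: eqP => [<-|/eqP neq_ab].
  by case/IHx=> p [a' [b' [m [neq_ab -> ->]]]]; exists (a :: p), a', b', m.
case/and3P=> /eqP size_xy /all_pred1P def_x /all_pred1P def_y.
by exists [::], a, b, (size x); rewrite {1}def_x size_xy -def_y.
Qed.

Lemma word_adj_nseq s a w : word_adj (nseq s a) w ->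
  exists2 d, d != a & w = rcons (nseq s.-1 a) d.
Proof.
move=> /word_adj_shape[p [a' [b [m [neq_ab def_x ->]]]]].
have in_nseq c : c \in p ++ a' :: nseq m b -> c = a.
  by rewrite -def_x => /nseqP[].
have def_a' : a' = a by apply: in_nseq; rewrite mem_cat mem_head orbT.
case: m def_x in_nseq => [|m] def_x in_nseq; last first.
  have def_b : b = a by apply: in_nseq; rewrite mem_cat !inE eqxx !orbT.
  by move: neq_ab; rewrite def_a' def_b eqxx.
exists b; first by rewrite -def_a' eq_sym.
have def_p : p = nseq (size p) a.
  by apply/all_pred1P/allP=> c c_p; apply/eqP/in_nseq; rewrite mem_cat c_p.
have := congr1 size def_x; rewrite size_nseq size_cat addn1 => ->.
by rewrite cats1 {1}def_p.
Qed.

Definition word_of n (x : {ffun 'I_n -> 'I_3}) : seq nat := [seq val (x i) | i <- enum 'I_n].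

Definition ffun_of_word n (w : seq nat) : {ffun 'I_n -> 'I_3} :=
  [ffun i : 'I_n => inord (nth 0 w i)].

Lemma nth_cat_nseq p a b m i : i < size p + m.+1 ->
  nth 0 (p ++ a :: nseq m b) i =
  if i < size p then nth 0 p i else if i == size p then a else b.
Proof.
move=> lt_i; rewrite nth_cat; case: ltnP => // le_pi.
case: eqP => [->|/eqP neq_ip]; first by rewrite subnn.
have -> : i - size p = (i - (size p).+1).+1 by lia.
by rewrite /= nth_nseq ifT //; lia.
Qed.

Section WordEncoding.

Variable n : nat.
Implicit Types x y : {ffun 'I_n -> 'I_3}.

Lemma size_word_of x : size (word_of x) = n.
Proof. by rewrite size_map size_enum_ord. Qed.

Lemma nth_word_of x (i : 'I_n) : nth 0 (word_of x) i = x i.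
Proof. by rewrite (nth_map i) ?size_enum_ord // nth_ord_enum. Qed.

Lemma word_of_in_words x : word_of x \in words n.
Proof.
by rewrite mem_words size_word_of eqxx /=; apply/allP=> a /mapP[i _ ->]; apply: ltn_ord.
Qed.

Lemma word_of_inj : injective (@word_of n).
Proof.
by move=> x y eq_xy; apply/ffunP=> i; apply/val_inj; rewrite /= -!nth_word_of eq_xy.
Qed.

Lemma ffun_of_wordK w : w \in words n -> word_of (ffun_of_word n w) = w.
Proof.
rewrite mem_words => /andP[/eqP size_w ter_w].
apply: (@eq_from_nth _ 0); rewrite size_word_of // => i lt_in.
rewrite (nth_word_of _ (Ordinal lt_in)) ffunE inordK //.
by apply: (allP ter_w); rewrite mem_nth ?size_w.
Qed.

Lemma word_of_split x (d : 'I_n) b : (forall i : 'I_n, d < i -> x i = b :> nat) ->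
  word_of x = take d (word_of x) ++ (x d : nat) :: nseq (n - d.+1) b.
Proof.
move=> tail_x; have le_dn : d <= size (word_of x) by rewrite size_word_of ltnW.
apply: (@eq_from_nth _ 0).
  by rewrite size_cat /= size_nseq size_takel // size_word_of; have := ltn_ord d; lia.
move=> i; rewrite size_word_of => lt_in; rewrite nth_cat size_takel //.
case: ltnP => [lt_id|le_di]; first by rewrite nth_take.
rewrite (nth_word_of x (Ordinal lt_in)); move: le_di; rewrite leq_eqVlt => /orP[/eqP eq_di|lt_di].
  have -> : Ordinal lt_in = d by apply: val_inj.
  by rewrite -eq_di subnn.
have -> : i - d = (i - d.+1).+1 by lia.
by rewrite tail_x //= nth_nseq ifT //; lia.
Qed.

Lemma sierp_K3_word_adj x y : sierp K3 n x y -> word_adj (word_of x) (word_of y).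
Proof.
case/existsP=> d /and3P[/forallP head_eq neq_d /forallP tail_swap].
have tail_x (i : 'I_n) : d < i -> x i = y d :> nat.
  by move=> lt_di; have /andP[/eqP-> _] := implyP (tail_swap i) lt_di.
have tail_y (i : 'I_n) : d < i -> y i = x d :> nat.
  by move=> lt_di; have /andP[_ /eqP->] := implyP (tail_swap i) lt_di.
have same_head : take d (word_of x) = take d (word_of y).
  apply: (@eq_from_nth _ 0) => [|i]; first by rewrite !size_take !size_word_of.
  rewrite size_take size_word_of ltn_ord => lt_id.
  have lt_in : i < n by apply: ltn_trans (ltn_ord d).
  rewrite !nth_take // (nth_word_of x (Ordinal lt_in)) (nth_word_of y (Ordinal lt_in)).
  by apply/eqP; apply: (implyP (head_eq (Ordinal lt_in))).
by rewrite (word_of_split tail_x) (word_of_split tail_y) same_head word_adj_swap.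
Qed.

Lemma word_adj_sierp_K3 x y : word_adj (word_of x) (word_of y) -> sierp K3 n x y.
Proof.
move=> /word_adj_shape[p [a [b [m [neq_ab def_x def_y]]]]].
have size_n : size p + m.+1 = n by rewrite -(size_word_of x) def_x size_cat /= size_nseq.
have lt_pn : size p < n by rewrite -size_n -addSnnS leq_addr.
have nth_x (i : 'I_n) : x i = nth 0 (p ++ a :: nseq m b) i :> nat.
  by rewrite -def_x nth_word_of.
have nth_y (i : 'I_n) : y i = nth 0 (p ++ b :: nseq m a) i :> nat.
  by rewrite -def_y nth_word_of.
have lt_i (i : 'I_n) : i < size p + m.+1 by rewrite size_n.
apply/existsP; exists (Ordinal lt_pn); apply/and3P; split.
- apply/forallP=> i; apply/implyP=> /= lt_ip.
  by rewrite -(inj_eq val_inj) /= nth_x nth_y !nth_cat_nseq ?lt_ip.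
- by rewrite /K3 -(inj_eq val_inj) /= nth_x nth_y !nth_cat_nseq ?ltnn ?eqxx.
- apply/forallP=> i; apply/implyP=> /= lt_pi.
  rewrite -!(inj_eq val_inj) /= !nth_x !nth_y !nth_cat_nseq ?ltnn ?eqxx //.
  have [-> ->] : (i < size p) = false /\ (i == size p :> nat) = false.
    by split; [rewrite ltnNge ltnW | rewrite gtn_eqF].
  by rewrite !eqxx.
Qed.

Lemma sierp_K3E x y : sierp K3 n x y = word_adj (word_of x) (word_of y).
Proof. by apply/idP/idP; [apply: sierp_K3_word_adj | apply: word_adj_sierp_K3]. Qed.

End WordEncoding.

(** * A neighbourhood-injective quotient of S_3^n for n >= 3 *)

Definition last3 (w : seq nat) := drop (size w - 3) w.

Definition last_other (w : seq nat) : option nat :=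
  if [seq a <- w | a != last 0 w] is a :: s then Some (last a s) else None.

Definition state (w : seq nat) : seq nat * option nat :=
  (last3 w, if constant (last3 w) then last_other w else None).

Definition state_adj (p q : seq nat * option nat) :=
  word_adj p.1 q.1 ||
  [&& constant p.1, constant q.1, head 0 p.1 != head 0 q.1,
      p.2 == Some (head 0 q.1) & q.2 == Some (head 0 p.1)].

Definition states : seq (seq nat * option nat) :=
  [seq (w, None) | w <- words 3] ++
  [seq (nseq 3 ab.1, Some ab.2) | ab <- [seq (a, b) | a <- iota 0 3, b <- iota 0 3] & ab.1 != ab.2].

Lemma state_adj_sym : symmetric state_adj.
Proof.
move=> p q; rewrite /state_adj word_adj_sym [head 0 q.1 == _]eq_sym; congr orb.
by case: (constant p.1); case: (constant q.1); case: (p.2 == _); case: (q.2 == _).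
Qed.

Lemma state_adj_irr : irreflexive state_adj.
Proof. by move=> p; rewrite /state_adj word_adj_irr eqxx !andbF. Qed.

Lemma last3_cat p w : size w = 3 -> last3 (p ++ w) = w.
Proof. by move=> size_w; rewrite /last3 size_cat size_w addnK drop_size_cat. Qed.

Lemma last3_cons a w : 3 <= size w -> last3 (a :: w) = last3 w.
Proof. by move=> size_w; rewrite /last3 /= subSn. Qed.

Lemma last3_small w : size w <= 3 -> last3 w = w.
Proof. by move=> size_w; rewrite /last3 (eqP size_w) drop0. Qed.

Lemma last_other_swap p a b m : a != b -> last_other (p ++ a :: nseq m.+1 b) = Some a.
Proof.
move=> neq_ab; have last_b : last 0 (p ++ a :: nseq m.+1 b) = b.
  by rewrite last_cat /=; elim: m => //= m ->.
have no_b k : [seq c <- nseq k b | c != b] = [::] by elim: k => //= k ->; rewrite eqxx.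
rewrite /last_other last_b -cat1s !filter_cat no_b /= neq_ab cats1.
by case: [seq _ <- p | _] => [|c s] //=; rewrite last_rcons.
Qed.

Lemma last_otherP w b : last_other w = Some b -> b \in w /\ b != last 0 w.
Proof.
rewrite /last_other; case def_s: [seq a <- w | _] => [|a s] // [<-].
have : last a s \in [seq a <- w | a != last 0 w] by rewrite def_s mem_last.
by rewrite mem_filter => /andP[].
Qed.

Lemma state_adj_word x y : 3 <= size x -> word_adj x y -> state_adj (state x) (state y).
Proof.
move=> size_x /word_adj_shape[p [a [b [m [neq_ab def_x def_y]]]]].
have [lt2m|le_m2] := ltnP 2 m.
  have {lt2m} [k def_m] : exists k, m = k.+3 by exists (m - 3); lia.
  have split_nseq c : nseq m c = nseq k c ++ nseq 3 c by rewrite def_m -addn3 nseqD.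
  have last3_x : last3 x = nseq 3 b by rewrite def_x split_nseq -cat_cons catA last3_cat.
  have last3_y : last3 y = nseq 3 a by rewrite def_y split_nseq -cat_cons catA last3_cat.
  have neq_ba : b != a by rewrite eq_sym.
  rewrite /state_adj /state last3_x last3_y def_x def_y def_m !last_other_swap //.
  by rewrite /= !eqxx neq_ba orbT.
have size_p : 2 - m <= size p by move: size_x; rewrite def_x size_cat /= size_nseq; lia.
set q := drop (size p - (2 - m)) p.
have def_p : p = take (size p - (2 - m)) p ++ q by rewrite cat_take_drop.
have size_q c d : size (q ++ c :: nseq m d) = 3.
  by rewrite size_cat size_drop /= size_nseq subKn // addnS subnK.
have last3_x : last3 x = q ++ a :: nseq m b by rewrite def_x {1}def_p -catA last3_cat.
have last3_y : last3 y = q ++ b :: nseq m a by rewrite def_y {1}def_p -catA last3_cat.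
by rewrite /state_adj /state last3_x last3_y word_adj_swap.
Qed.

Lemma last3_neighbours_const a b x y z : 3 <= size x -> a != b ->
  [&& size x == size z, all (pred1 b) x & all (pred1 a) z] -> word_adj x y ->
  last3 y != last3 z.
Proof.
move=> size_x neq_ab /and3P[/eqP size_z /all_pred1P def_x /all_pred1P def_z].
rewrite def_x => /word_adj_nseq[d _ ->].
have [k def_k] : exists k, size x = k.+3 by exists (size x - 3); lia.
have -> : rcons (nseq (size x).-1 b) d = nseq k b ++ [:: b; b; d].
  by rewrite def_k; elim: k {def_k} => //= k ->.
rewrite def_z -size_z def_k -addn3 nseqD !last3_cat ?size_nseq //=.
by apply: contra neq_ab => /eqP[->].
Qed.

Lemma last3_neighbours x y z : 3 <= size x -> word_adj x y -> word_adj x z ->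
  y != z -> last3 y != last3 z.
Proof.
elim: x y z => [|c x IHx] [|c1 y] [|c2 z] // size_x adj_y adj_z neq_yz.
have [] : size x = size y /\ size x = size z.
  by split; [case: (word_adj_size adj_y) | case: (word_adj_size adj_z)].
move=> size_y size_z.
have [small|big] := ltnP (size x) 3.
  by rewrite !last3_small //= -?size_y -?size_z.
rewrite !last3_cons -?size_y -?size_z //.
move: adj_y adj_z neq_yz => /=.
case: (c =P c1) => [<-|/eqP neq_c1]; case: (c =P c2) => [<-|/eqP neq_c2].
- by move=> adj_y adj_z neq_yz; apply: IHx => //; apply: contra neq_yz => /eqP->.
- by move=> adj_y adj_z _; apply: last3_neighbours_const adj_z adj_y.
- by move=> adj_y adj_z _; rewrite eq_sym; apply: last3_neighbours_const adj_y adj_z.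
move=> /and3P[_ /all_pred1P def_x1 /all_pred1P def_y].
move=> /and3P[_ /all_pred1P def_x2 /all_pred1P def_z].
have nth_x0 a : x = nseq (size x) a -> nth 0 x 0 = a by move=> ->; rewrite nth_nseq ifT //; lia.
by rewrite -(nth_x0 _ def_x1) -(nth_x0 _ def_x2) def_y def_z -size_y -size_z eqxx.
Qed.

Lemma state_in_states n w : 3 <= n -> w \in words n -> state w \in states.
Proof.
rewrite mem_words => le3n /andP[/eqP size_w ter_w].
have last3_in : last3 w \in words 3.
  rewrite mem_words size_drop subKn ?size_w // eqxx /=.
  by apply/allP=> a /mem_drop; apply/(allP ter_w).
have none_in v : v \in words 3 -> (v, None) \in states.
  by move=> v_in; rewrite mem_cat (map_f (fun v => (v, None))).
rewrite /state; case: ifP => [const|_]; last exact: none_in.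
case def_b: (last_other w) => [b|]; last exact: none_in.
have [b_in neq_b] := last_otherP def_b.
have [a def_a] : exists a, last3 w = nseq 3 a.
  by move: last3_in; rewrite mem_words => /andP[/eqP <- _]; apply/constantP: const.
have last_a : last 0 w = a.
  by rewrite -[w](cat_take_drop (size w - 3)) last_cat -/(last3 w) def_a.
have a_in : a \in w by apply: (mem_drop (n0 := size w - 3)); rewrite -/(last3 w) def_a mem_head.
rewrite def_a mem_cat; apply/orP; right; apply/mapP; exists (a, b) => //.
rewrite mem_filter; apply/andP; split; first by rewrite /= eq_sym -last_a.
by apply/allpairsP; exists (a, b); rewrite !mem_iota /= (allP ter_w) ?(allP ter_w b).
Qed.

Lemma sierp_K3_sym n : symmetric (sierp K3 n).
Proof. by move=> x y; rewrite !sierp_K3E word_adj_sym. Qed.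

Lemma sierp_colorable_of_words k j asg :
  proper_coloring (conflict_nbrs word_adj (words k)) j asg ->
  inj_edge_colorable (sierp K3 k) j.
Proof.
move=> proper; eexists.
apply: (inj_edge_coloring_pullback word_adj_sym word_adj_irr (@sierp_K3_sym k) _ _ _ proper).
- exact: word_of_in_words.
- by move=> x y; rewrite sierp_K3E.
- by move=> x y z _ _; rewrite (inj_eq (@word_of_inj k)).
Qed.

Lemma sierp_colorable_of_states n j asg : 3 <= n ->
  proper_coloring (conflict_nbrs state_adj states) j asg ->
  inj_edge_colorable (sierp K3 n) j.
Proof.
move=> le3n proper; eexists.
apply: (inj_edge_coloring_pullback state_adj_sym state_adj_irr (@sierp_K3_sym n)
          (F := fun x => state (word_of x)) _ _ _ proper).
- by move=> x; apply: (state_in_states le3n); apply: word_of_in_words.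
- by move=> x y; rewrite sierp_K3E; apply: state_adj_word; rewrite size_word_of.
move=> x y z; rewrite !sierp_K3E => adj_y adj_z neq_yz.
have := last3_neighbours _ adj_y adj_z; rewrite size_word_of (inj_eq (@word_of_inj n)).
by move=> /(_ le3n neq_yz); apply: contra => /eqP[->].
Qed.

Lemma sierp_not_colorable k n j : k <= n ->
  ~~ coloring_extendable (conflict_nbrs word_adj (words k)) j [::] ->
  ~ inj_edge_colorable (sierp K3 n) j.
Proof.
move=> le_kn; pose G w := ffun_of_word n (nseq (n - k) 0 ++ w).
have word_of_G w : w \in words k -> word_of (G w) = nseq (n - k) 0 ++ w.
  rewrite mem_words => /andP[/eqP size_w ter_w]; apply: ffun_of_wordK.
  by rewrite mem_words size_cat size_nseq size_w subnK // eqxx /ternary all_cat all_nseq orbT.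
apply: (not_inj_edge_colorable word_adj_sym word_adj_irr (G := G)).
- move=> v w v_in w_in /(congr1 (fun x => drop (n - k) (word_of x))).
  by rewrite /= !word_of_G // !drop_size_cat ?size_nseq.
- by move=> v w v_in w_in adj_vw; rewrite sierp_K3E !word_of_G // word_adj_cat.
Qed.

(* Found by backtracking search; entry i colors the i-th edge of
   [edges_in state_adj states]. *)
Definition state_coloring : seq nat :=
  [:: 1; 2; 3; 1; 1; 1; 2; 2; 2; 2; 4; 3; 2; 3; 1; 4; 5; 4; 1; 4; 3; 1; 5; 4; 2; 4; 4;
      3; 2; 3; 3; 1; 5; 4; 3; 1; 3; 5; 5; 2; 3; 4; 2; 1; 1; 2; 4; 2; 3; 3; 5; 5; 4; 5].

Theorem mainTheorem5 :
  inj_chromatic_index_is (sierp K3 1) 3 /\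
  inj_chromatic_index_is (sierp K3 2) 4 /\
  (forall n : nat, 3 <= n -> inj_chromatic_index_is (sierp K3 n) 5).
Proof.
split; [|split; [|move=> n le3n]]; apply: inj_chromatic_index_is_intro.
- by apply: (sierp_colorable_of_words (asg := [:: 1; 2; 3])); vm_compute.
- by apply: (sierp_not_colorable (leqnn 1)); vm_compute.
- by apply: (sierp_colorable_of_words (asg := [:: 1; 2; 3; 1; 4; 2; 4; 3; 3; 1; 4; 2])); vm_compute.
- by apply: (sierp_not_colorable (leqnn 2)); vm_compute.
- by apply: (sierp_colorable_of_states (asg := state_coloring) le3n); vm_compute.
- by apply: (sierp_not_colorable le3n); vm_compute.
Qed.
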